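(* In the standing setting, for all $A',B'\in Q'$: $B'\subseteq A'$ if and only if $g'(B')\subseteq g'(A')$. Consequently $g':Q'\to Q''$ is an order isomorphism between $(Q',\subseteq)$ and $(Q'',\subseteq)$, where $Q''=g'(Q')\subseteq Q$.
   Context: Standing setting: $(P,\preceq)$ is a finite poset with a bottom and a top element; $f:P\to P'$ is a surjective map onto $P'=f(P)$; $f^{-1}(a')=\{a\in P: f(a)=a'\}$; the relation $\preceq'$ on $P'$ is defined by $b'\preceq' a'$ iff there exist $a\in f^{-1}(a')$, $b\in f^{-1}(b')$ with $b\preceq a$. Assume the three conditions: (D) for all $a',b'\in P'$ with $b'\preceq' a'$ and every $a\in f^{-1}(a')$ there is $b\in f^{-1}(b')$ with $b\preceq a$; (U) for all $a',b'\in P'$ with $b'\preceq' a'$ and every $b\in f^{-1}(b')$ there is $a\in f^{-1}(a')$ with $b\preceq a$; (S) for all $a,b,c\in P$, if $c\preceq b\preceq a$ and $f(c)=f(a)$ then $f(b)=f(a)$. (Then $(P',\preceq')$ is a poset.) A down-set of a poset is a subset $A$ such that $a\in A$ and $b\preceq a$ imply $b\in A$. $Q$ is the set of nonempty down-sets of $(P,\preceq)$ and $Q'$ the set of nonempty down-sets of $(P',\preceq')$, each ordered by inclusion. $g:2^P\to 2^{P'}$ is $g(A)=\{f(a):a\in A\}$. For $A'\in Q'$, $g^{-1}(A')=\{A\in Q: g(A)=A'\}$ and $g'(A')=\bigcup_{A\in g^{-1}(A')}A$. *)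

From mathcomp Require Import all_boot.
Set Implicit Arguments. Unset Strict Implicit. Unset Printing Implicit Defensive.

Definition induced_le (P P' : finType) (le : rel P) (f : P -> P') : rel P' :=
  fun b' a' => [exists a, exists b, [&& f a == a', f b == b' & le b a]].

Definition downset (T : finType) (le : rel T) (A : {set T}) : bool :=
  [forall a, forall b, ((a \in A) && le b a) ==> (b \in A)].

Definition Qset (T : finType) (le : rel T) : {set {set T}} :=
  [set A : {set T} | (A != set0) && downset le A].

Definition g (P P' : finType) (f : P -> P') (A : {set P}) : {set P'} := f @: A.

Definition ginv (P P' : finType) (le : rel P) (f : P -> P') (A' : {set P'})
  : {set {set P}} := [set A in Qset le | g f A == A'].

Definition g' (P P' : finType) (le : rel P) (f : P -> P') (A' : {set P'})
  : {set P} := \bigcup_(A in ginv le f A') A.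

From mathcomp Require Import all_boot.

Set Implicit Arguments.
Unset Strict Implicit.
Unset Printing Implicit Defensive.

(* For a nonempty down-set A' of the induced order (P', <=')
   the map g' is simply the preimage: g'(A') = f^-1(A').  Indeed,
   - f^-1(A') is a down-set of P, since b <= a with f a in A' gives
     f b <=' f a, hence f b in A'; it is nonempty and, f being surjective,
     its image is exactly A'.  So f^-1(A') is itself a member of g^-1(A');
   - every A in g^-1(A') satisfies A <= f^-1(f(A)) = f^-1(A').
   Hence the union g'(A') is the largest member f^-1(A').  Since preimage
   under a surjection reflects and preserves inclusion, the three claims
   (g' maps Q' into Q, g' is an order embedding, g' is injective) follow at
   once. *)

Lemma imset_preimset (T T' : finType) (f : T -> T')
    (f_surj : forall y : T', exists x : T, f x = y) (A' : {set T'}) :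
  f @: (f @^-1: A') = A'.
Proof.
apply/setP => y; apply/imsetP/idP => [[x] | yA'].
  by rewrite inE => xA' ->.
by have [x fx] := f_surj y; exists x; rewrite // inE fx.
Qed.

Lemma preimset_subsetE (T T' : finType) (f : T -> T')
    (f_surj : forall y : T', exists x : T, f x = y) (A' B' : {set T'}) :
  (f @^-1: B' \subset f @^-1: A') = (B' \subset A').
Proof.
apply/idP/idP => [sub | /preimsetS //].
by rewrite -(imset_preimset f_surj A') -(imset_preimset f_surj B') imsetS.
Qed.

Section PreimageOfDownsets.

Variables (P P' : finType) (le : rel P) (f : P -> P').
Hypothesis f_surj : forall a' : P', exists a : P, f a = a'.

Let le' := induced_le le f.

(* Preimages of down-sets of the induced order are down-sets of P:
   b <= a gives f b <=' f a, witnessed by the pair (a, b) itself. *)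
Lemma preimset_downset (A' : {set P'}) :
  downset le' A' -> downset le (f @^-1: A').
Proof.
move=> /forallP dA'; apply/forallP => a; apply/forallP => b.
apply/implyP => /andP []; rewrite !inE => faA' le_ba.
apply: (implyP (forallP (dA' (f a)) (f b))); rewrite faA' /=.
by apply/existsP; exists a; apply/existsP; exists b; rewrite !eqxx le_ba.
Qed.

Lemma preimset_Qset (A' : {set P'}) :
  A' \in Qset le' -> f @^-1: A' \in Qset le.
Proof.
rewrite !inE => /andP [/set0Pn [a' a'A'] dA'].
rewrite preimset_downset // andbT.
by have [a fa] := f_surj a'; apply/set0Pn; exists a; rewrite inE fa.
Qed.

(* On Q', g' is the preimage map: f^-1(A') is the largest down-set of P
   whose image is A'. *)
Lemma g'_preimset (A' : {set P'}) :
  A' \in Qset le' -> g' le f A' = f @^-1: A'.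
Proof.
move=> A'Q; have preim_ginv : f @^-1: A' \in ginv le f A'.
  by rewrite inE preimset_Qset //= /g imset_preimset.
apply/eqP; rewrite eqEsubset (bigcup_sup _ preim_ginv) andbT.
apply/bigcupsP => A; rewrite inE => /andP [_ /eqP <-].
by apply/subsetP => a aA; rewrite inE; apply: imset_f.
Qed.

End PreimageOfDownsets.

Theorem lemma10 (P P' : finType) (le : rel P) (f : P -> P')
  (le_refl : reflexive le) (le_anti : antisymmetric le) (le_trans : transitive le)
  (has_bot : exists bot : P, forall a, le bot a)
  (has_top : exists top : P, forall a, le a top)
  (f_surj : forall a' : P', exists a : P, f a = a')
  (condD : forall a' b' : P', induced_le le f b' a' ->
      forall a, f a = a' -> exists b, f b = b' /\ le b a)
  (condU : forall a' b' : P', induced_le le f b' a' ->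
      forall b, f b = b' -> exists a, f a = a' /\ le b a)
  (condS : forall a b c : P, le c b -> le b a -> f c = f a -> f b = f a) :
  (* g' maps Q' into Q, so Q'' = g'(Q') is a subset of Q *)
  (forall A' : {set P'}, A' \in Qset (induced_le le f) -> g' le f A' \in Qset le) /\
  (* B' ⊆ A' iff g'(B') ⊆ g'(A') *)
  (forall A' B' : {set P'}, A' \in Qset (induced_le le f) -> B' \in Qset (induced_le le f) ->
      (B' \subset A') <-> (g' le f B' \subset g' le f A')) /\
  (* hence g' : Q' -> Q'' is injective, i.e. an order isomorphism onto its image *)
  {in Qset (induced_le le f) &, injective (g' le f)}.
Proof.
have g'E := g'_preimset (le := le) f_surj.
split; first by move=> A' A'Q; rewrite g'E // preimset_Qset.
split; first by move=> A' B' A'Q B'Q; rewrite !g'E // preimset_subsetE.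
move=> A' B' A'Q B'Q eq_g'.
apply/eqP; rewrite eqEsubset -!(preimset_subsetE f_surj) -!g'E //.
by rewrite eq_g' subxx.
Qed.
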